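(* Let $m$ be a point of the locale $\mathrm{Max}(R)$ (a model of the geometric theory presenting it). Then $\sigma_m(a):=(\{r\in\mathbb{Q}: m\models D(a-r)\},\ \{s\in\mathbb{Q}: m\models D(s-a)\})$ is a Dedekind real for every $a\in R$, and $\sigma_m:R\to\mathbb{R}$ is a representation, i.e. a Riesz space morphism (linear and lattice preserving) with $\sigma_m(1)=1$.
   Context: $R$ is a Riesz space over $\mathbb{Q}$ with strong unit $1$; rationals $r$ are identified with $r\cdot1$. $\mathrm{Max}(R)$ is the locale (frame) freely generated by symbols $D(a)$, $a\in R$, subject to: $D(1)=1$; $D(a)\wedge D(-a)=0$; $D(a+b)\le D(a)\vee D(b)$; $D(a)=0$ if $a\le0$; $D(a\vee b)=D(a)\vee D(b)$; $D(a)=\bigvee_{s>0,\ s\in\mathbb{Q}}D(a-s)$. A point/model $m$ is a completely prime filter of this frame; $m\models D(a)$ means $D(a)\in m$. A Dedekind real is a pair (lower real $L$, upper real $U$) of rounded inhabited down-/up-closed sets of rationals with every element of $L$ below every element of $U$ and, for rationals $p<q$, $p\in L$ or $q\in U$. *)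

From HB Require Import structures.
From mathcomp Require Import all_boot all_order all_algebra.
Set Implicit Arguments. Unset Strict Implicit. Unset Printing Implicit Defensive.
Import Order.TTheory GRing.Theory Num.Theory.
Local Open Scope ring_scope.

Record is_riesz (V : lmodType rat) (le : rel V) (join : V -> V -> V) : Prop := {
  riesz_refl : forall a, le a a;
  riesz_trans : forall a b c, le a b -> le b c -> le a c;
  riesz_antisym : forall a b, le a b -> le b a -> a = b;
  riesz_add : forall a b c, le a b -> le (a + c) (b + c);
  riesz_scale : forall (l : rat) a b, 0 <= l -> le a b -> le (l *: a) (l *: b);
  riesz_join_l : forall a b, le a (join a b);
  riesz_join_r : forall a b, le b (join a b);
  riesz_join_lub : forall a b c, le a c -> le b c -> le (join a b) c
}.

Definition rmeet (V : lmodType rat) (join : V -> V -> V) (a b : V) : V :=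
  - join (- a) (- b).

Definition strong_unit (V : lmodType rat) (le : rel V) (u : V) : Prop :=
  le 0 u /\ forall a : V, exists n : nat, le a (n%:R *: u).

(* A point of the locale Max(R) = a model of the geometric theory presenting it:
   a subset [m] of R (m a  <->  m |= D(a)) satisfying the relations, where the
   rational s is identified with s *: u. *)
Definition is_point (V : lmodType rat) (le : rel V) (join : V -> V -> V) (u : V)
    (m : V -> Prop) : Prop :=
  m u /\
  (forall a, ~ (m a /\ m (- a))) /\
  (forall a b, m (a + b) -> m a \/ m b) /\
  (forall a, le a 0 -> ~ m a) /\
  (forall a b, m (join a b) <-> (m a \/ m b)) /\
  (forall a, m a <-> exists s : rat, 0 < s /\ m (a - s *: u)).

Definition cut := ((rat -> Prop) * (rat -> Prop))%type.

Definition is_dedekind (x : cut) : Prop :=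
  let L := x.1 in let U := x.2 in
  (exists p, L p) /\ (exists q, U q) /\
  (forall p, L p <-> exists p', p < p' /\ L p') /\
  (forall q, U q <-> exists q', q' < q /\ U q') /\
  (forall p q, L p -> U q -> p < q) /\
  (forall p q, p < q -> L p \/ U q).

Definition cut_eq (x y : cut) : Prop :=
  forall r, (x.1 r <-> y.1 r) /\ (x.2 r <-> y.2 r).

Definition cut_of_rat (c : rat) : cut := (fun r : rat => is_true (r < c), fun s : rat => is_true (c < s)).

Definition cut_add (x y : cut) : cut :=
  (fun r => exists p q, x.1 p /\ y.1 q /\ r = p + q,
   fun s => exists p q, x.2 p /\ y.2 q /\ s = p + q).

Definition cut_scale (l : rat) (x : cut) : cut :=
  if 0 < l then (fun r => x.1 (r / l), fun s => x.2 (s / l))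
  else if l < 0 then (fun r => x.2 (r / l), fun s => x.1 (s / l))
  else cut_of_rat 0.

Definition cut_max (x y : cut) : cut :=
  (fun r => x.1 r \/ y.1 r, fun s => x.2 s /\ y.2 s).

Definition cut_min (x y : cut) : cut :=
  (fun r => x.1 r /\ y.1 r, fun s => x.2 s \/ y.2 s).

Definition sigma (V : lmodType rat) (u : V) (m : V -> Prop) (a : V) : cut :=
  (fun r => m (a - r *: u), fun s => m (s *: u - a)).

(* Writing L(a) = {r | m |= D(a - r)} and U(a) = {s | m |= D(s - a)}, the
   upper cut of a is the lower cut of -a, reflected ([upper_as_lower]).  Additivity of L is the key step: the inclusion
   L(a+b) <= L(a)+L(b) uses an approximation lemma ([lower_approx], found
   by an Archimedean argument) to split r = p + q. *)
From Stdlib Require Import Classical.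
From HB Require Import structures.
From mathcomp Require Import all_boot all_order all_algebra.
Import Order.TTheory GRing.Theory Num.Theory.
Local Open Scope ring_scope.
Set Implicit Arguments. Unset Strict Implicit.

Lemma exists_nat_gt (x : rat) : exists n : nat, x < n%:R.
Proof.
case: (lerP x 0) => hx; first by exists 1%N; apply: le_lt_trans hx _.
by exists (Num.bound x); apply: archi_boundP; apply: ltW.
Qed.

Section RieszOrder.

Variables (V : lmodType rat) (le : rel V) (join : V -> V -> V).
Hypothesis HR : is_riesz le join.

Lemma le_addl x y z : le x y -> le (z + x) (z + y).
Proof. by move=> h; rewrite ![z + _]addrC; apply: (riesz_add HR). Qed.

Lemma le_opp x y : le x y -> le (- y) (- x).
Proof.
move=> h; have := riesz_add HR (- x - y) h.
by rewrite addrA addrN add0r addrCA subrr addr0.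
Qed.

Lemma le_subr0 x y : le x y -> le (x - y) 0.
Proof. by move=> h; have := riesz_add HR (- y) h; rewrite subrr. Qed.

Lemma le_scalel y (c d : rat) : le 0 y -> c <= d -> le (c *: y) (d *: y).
Proof.
move=> hy hcd; have h0 : 0 <= d - c by rewrite subr_ge0.
have := riesz_add HR (c *: y) (riesz_scale HR h0 hy).
by rewrite scaler0 add0r scalerBl subrK.
Qed.

Lemma joinDr a b c : join (a + c) (b + c) = join a b + c.
Proof.
apply: (riesz_antisym HR).
  by apply: (riesz_join_lub HR); apply: (riesz_add HR);
    [exact: (riesz_join_l HR) | exact: (riesz_join_r HR)].
set J := join (a + c) (b + c).
have hab : le (join a b) (J - c).
  apply: (riesz_join_lub HR).
    by have := riesz_add HR (- c) (riesz_join_l HR (a + c) (b + c)); rewrite addrK.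
  by have := riesz_add HR (- c) (riesz_join_r HR (a + c) (b + c)); rewrite addrK.
by have := riesz_add HR c hab; rewrite subrK.
Qed.

Lemma le_join_scale (c : rat) a b :
  0 <= c -> le (join (c *: a) (c *: b)) (c *: join a b).
Proof.
move=> hc; apply: (riesz_join_lub HR); apply: (riesz_scale HR) => //;
  [exact: (riesz_join_l HR) | exact: (riesz_join_r HR)].
Qed.

Lemma joinZ (c : rat) a b : 0 < c -> c *: join a b = join (c *: a) (c *: b).
Proof.
move=> hc; have c0 : c != 0 by rewrite lt0r_neq0.
apply: (riesz_antisym HR); last exact: le_join_scale (ltW hc).
have hinv : le (join a b) (c^-1 *: join (c *: a) (c *: b)).
  have hci : 0 <= c^-1 by rewrite invr_ge0 ltW.
  by have := le_join_scale (c *: a) (c *: b) hci; rewrite !scalerA !mulVf // !scale1r.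
have := riesz_scale HR (ltW hc) hinv.
by rewrite scalerA mulfV // scale1r.
Qed.

End RieszOrder.

Section Point.

Variables (V : lmodType rat) (le : rel V) (join : V -> V -> V) (u : V).
Variable m : V -> Prop.
Hypothesis HR : is_riesz le join.
Hypothesis Hu : strong_unit le u.
Hypothesis Hm : is_point le join u m.

Lemma point_opp a : ~ (m a /\ m (- a)).
Proof. by have [_ [mopp _]] := Hm; apply: mopp. Qed.

Lemma point_add a b : m (a + b) -> m a \/ m b.
Proof. by have [_ [_ [madd _]]] := Hm; apply: madd. Qed.

Lemma point_nonpos a : le a 0 -> ~ m a.
Proof. by have [_ [_ [_ [mneg _]]]] := Hm; apply: mneg. Qed.

Lemma point_join a b : m (join a b) <-> m a \/ m b.
Proof. by have [_ [_ [_ [_ [mjoin _]]]]] := Hm; apply: mjoin. Qed.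

Lemma point_round a : m a <-> exists s : rat, 0 < s /\ m (a - s *: u).
Proof. by have [_ [_ [_ [_ [_ mround]]]]] := Hm; apply: mround. Qed.

(* m |= D(x) and x <= y give m |= D(y): write y = x + (y - x). *)
Lemma point_mono x y : le x y -> m x -> m y.
Proof.
move=> hxy mx; have : m (y + (x - y)) by rewrite addrC subrK.
by case/point_add => // /(point_nonpos (le_subr0 HR hxy)).
Qed.

(* D((n+1) z) <= D(z) \/ D(n z), iterated. *)
Lemma point_natmul (n : nat) z : m (n.+1%:R *: z) -> m z.
Proof.
elim: n => [|n IH]; first by rewrite scale1r.
by rewrite mulrS scalerDl scale1r => /point_add [] //; apply: IH.
Qed.

(* For y >= 0, some (n+1)-fold multiple of c *: y dominates y. *)
Lemma point_scale_nonneg (c : rat) y : 0 < c -> le 0 y -> m y -> m (c *: y).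
Proof.
move=> hc hy my; have [[|n] hn] := exists_nat_gt c^-1.
  by move: hn; rewrite ltNge invr_ge0 (ltW hc).
apply: (@point_natmul n); rewrite scalerA; apply: (point_mono _ my).
rewrite -{1}(scale1r y); apply: (le_scalel HR) => //.
by rewrite -[X in X <= _](mulVf (lt0r_neq0 hc)) (ler_pM2r hc) ltW.
Qed.

(* Reduce to the positive part join x 0, which commutes with scaling. *)
Lemma point_scale_imp (c : rat) x : 0 < c -> m x -> m (c *: x).
Proof.
move=> hc mx.
have mj : m (join x 0) by apply/point_join; left.
have := point_scale_nonneg hc (riesz_join_r HR x 0) mj.
rewrite (joinZ HR _ _ hc) scaler0 => /point_join [] //.
by move/(point_nonpos (riesz_refl HR 0)).
Qed.

Lemma point_scale (c : rat) x : 0 < c -> m (c *: x) <-> m x.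
Proof.
move=> hc; split; last exact: point_scale_imp.
move=> /(@point_scale_imp c^-1); rewrite scalerA mulVf ?(lt0r_neq0 hc) // scale1r.
by apply; rewrite invr_gt0.
Qed.

Lemma point_rat (c : rat) : m (c *: u) <-> 0 < c.
Proof.
have [u_ge0 _] := Hu.
split; last by move=> hc; apply: point_scale_imp => //; case: Hm.
rewrite ltNge => mc; apply/negP => hc; apply: (point_nonpos _ mc).
by have := le_scalel HR u_ge0 hc; rewrite scale0r.
Qed.

Lemma upper_as_lower a (s : rat) : m (s *: u - a) <-> m (- a - (- s) *: u).
Proof. by rewrite scaleNr opprK addrC. Qed.

Lemma lower_inhabited a : exists p : rat, m (a - p *: u).
Proof.
have [n hn] := Hu.2 (- a); exists (- (n%:R + 1)).
apply: (point_mono _ (proj1 Hm)).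
have := le_addl HR (a + u) hn.
by rewrite addrAC subrr add0r scaleNr opprK scalerDl scale1r addrA (addrAC a).
Qed.

Lemma upper_inhabited a : exists q : rat, m (q *: u - a).
Proof.
have [n hn] := Hu.2 a; exists (n%:R + 1).
apply: (point_mono _ (proj1 Hm)).
have := riesz_add HR (u - a) hn.
by rewrite addrC subrK addrA scalerDl scale1r.
Qed.

Lemma lower_rounded a (p : rat) :
  m (a - p *: u) <-> exists p', p < p' /\ m (a - p' *: u).
Proof.
split.
  move/point_round => [s [hs h]]; exists (p + s); split; first by rewrite ltrDl.
  by rewrite scalerDl opprD addrA.
move=> [p' [hp h]]; apply/point_round; exists (p' - p).
by rewrite subr_gt0 scalerBl opprB addrA subrK.
Qed.

Lemma upper_rounded a (q : rat) :
  m (q *: u - a) <-> exists q', q' < q /\ m (q' *: u - a).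
Proof.
split.
  move/point_round => [s [hs h]]; exists (q - s); split; first by rewrite gtrBl.
  by rewrite scalerBl addrAC.
move=> [q' [hq h]]; apply/point_round; exists (q - q').
by rewrite subr_gt0 scalerBl opprB addrC addrA subrK.
Qed.

(* Lower below upper: otherwise both D(a - q) and D(q - a) would hold. *)
Lemma cut_disjoint a (p q : rat) : m (a - p *: u) -> m (q *: u - a) -> p < q.
Proof.
move=> hp hq; rewrite ltNge; apply/negP => hqp.
have hu := le_scalel HR Hu.1 hqp.
have := point_mono (le_addl HR a (le_opp HR hu)) hp.
by move=> ha; apply: (point_opp (conj ha _)); rewrite opprB.
Qed.

(* Locatedness: (a - p) + (q - a) = q - p > 0. *)
Lemma cut_located a (p q : rat) : p < q -> m (a - p *: u) \/ m (q *: u - a).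
Proof.
move=> hpq; apply: point_add.
by rewrite addrC addrA subrK -scalerBl point_rat subr_gt0.
Qed.

Lemma sigma_dedekind a : is_dedekind (sigma u m a).
Proof.
split; first exact: lower_inhabited. split; first exact: upper_inhabited.
split; first exact: lower_rounded. split; first exact: upper_rounded.
split; [exact: cut_disjoint | exact: cut_located].
Qed.

(* Some lower point p has p + s outside the lower cut; otherwise the lower
   cut would climb by s forever and overtake an upper point. *)
Lemma lower_approx a (s : rat) :
  0 < s -> exists p, m (a - p *: u) /\ ~ m (a - (p + s) *: u).
Proof.
move=> hs; apply: NNPP => none.
have step p : m (a - p *: u) -> m (a - (p + s) *: u).
  by move=> hp; apply: NNPP => hn; apply: none; exists p.
have [p0 hp0] := lower_inhabited a; have [q0 hq0] := upper_inhabited a.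
have climb (k : nat) : m (a - (p0 + k%:R * s) *: u).
  elim: k => [|k IH]; first by rewrite mul0r addr0.
  by rewrite -addn1 natrD mulrDl mul1r addrA; apply: step.
have [k hk] := exists_nat_gt ((q0 - p0) / s).
have below := cut_disjoint (climb k) hq0.
move: hk; rewrite ltr_pdivrMr // ltrBlDl => above.
by have := lt_trans below above; rewrite ltxx.
Qed.

Lemma lower_split a b (p q : rat) :
  m (a + b - (p + q) *: u) -> m (a - p *: u) \/ m (b - q *: u).
Proof. by rewrite scalerDl opprD addrACA; apply: point_add. Qed.

Lemma lower_add a b (r : rat) : m (a + b - r *: u) <->
  exists p q, m (a - p *: u) /\ m (b - q *: u) /\ r = p + q.
Proof.
split.
  move/lower_rounded => [r' [hr h]].
  have hs : 0 < r' - r by rewrite subr_gt0.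
  have [p [hp hnp]] := lower_approx a hs.
  have split_r' : r' = (p + (r' - r)) + (r - p) by rewrite addrAC !subrKC.
  move: h; rewrite {1}split_r' => /lower_split [] // hb.
  by exists p, (r - p); split => //; split => //; rewrite addrC subrK.
move=> [p [q [hp [hq ->]]]].
have [p' [hpp hp']] := (lower_rounded a p).1 hp.
have split_a : a = a + b + - b by rewrite addrK.
have split_p' : p' = (p + q) + (p' - (p + q)) by rewrite addrC subrK.
move: hp'; rewrite {1}split_a {1}split_p' => /lower_split [] // hb.
have hb' : m ((p + q - p') *: u - b) by apply/upper_as_lower; rewrite !opprB.
have hlt : p + q - p' < q by rewrite ltrBlDr addrC ltrD2l.
by have := lt_trans (cut_disjoint hq hb') hlt; rewrite ltxx.
Qed.

Lemma sigma_add a b :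
  cut_eq (sigma u m (a + b)) (cut_add (sigma u m a) (sigma u m b)).
Proof.
move=> r; rewrite /sigma /cut_add /=; split; first exact: lower_add.
split.
  move/upper_as_lower; rewrite opprD => /lower_add [p [q [hp [hq e]]]].
  exists (- p), (- q); rewrite !upper_as_lower !opprK.
  by split => //; split => //; rewrite -opprD -e opprK.
move=> [p [q [hp [hq ->]]]]; apply/upper_as_lower; rewrite opprD; apply/lower_add.
exists (- p), (- q); rewrite -!upper_as_lower.
by split => //; split => //; rewrite opprD.
Qed.

(* Positive scalars act through [point_scale]; negative ones also swap the
   cuts; the zero scalar gives the cut of 0 by [point_rat]. *)
Lemma sigma_scale (l : rat) a :
  cut_eq (sigma u m (l *: a)) (cut_scale l (sigma u m a)).
Proof.
move=> r; rewrite /cut_scale /sigma; case: ltrgt0P => hl /=.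
- have l0 : l != 0 by rewrite lt0r_neq0.
  have scale_lower : l *: (a - (r / l) *: u) = l *: a - r *: u.
    by rewrite scalerBr scalerA mulrCA mulfV // mulr1.
  have scale_upper : l *: ((r / l) *: u - a) = r *: u - l *: a.
    by rewrite scalerBr scalerA mulrCA mulfV // mulr1.
  by rewrite -scale_lower -scale_upper !point_scale.
- have l0 : l != 0 by rewrite ltr0_neq0.
  have hc : 0 < - l^-1 by rewrite oppr_gt0 invr_lt0.
  have to_upper : (- l^-1) *: (l *: a - r *: u) = (r / l) *: u - a.
    rewrite scalerBr !scalerA mulNr mulVf // scaleN1r mulNr mulrC scaleNr.
    by rewrite opprK addrC.
  have to_lower : (- l^-1) *: (r *: u - l *: a) = a - (r / l) *: u.
    rewrite scalerBr !scalerA !mulNr mulVf // !scaleNr scale1r opprK mulrC.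
    by rewrite addrC.
  by rewrite -(point_scale (l *: a - r *: u) hc) -(point_scale (r *: u - l *: a) hc)
    to_upper to_lower.
- rewrite hl /cut_of_rat /= scale0r add0r subr0 -scaleNr !point_rat oppr_gt0.
  by split.
Qed.

Lemma lower_join a b (r : rat) :
  m (join a b - r *: u) <-> m (a - r *: u) \/ m (b - r *: u).
Proof. by rewrite -(joinDr HR); apply: point_join. Qed.

Lemma upper_join a b (s : rat) :
  m (s *: u - join a b) <-> m (s *: u - a) /\ m (s *: u - b).
Proof.
have upper_le x y : le x y -> m (s *: u - y) -> m (s *: u - x).
  by move=> hxy; apply: point_mono; apply: (le_addl HR); apply: (le_opp HR).
split.
  by move=> h; split; apply: (upper_le _ _ _ h);
    [exact: (riesz_join_l HR) | exact: (riesz_join_r HR)].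
move=> [ha hb].
have [s1 [hs1 ha1]] := (upper_rounded a s).1 ha.
have [s2 [hs2 hb2]] := (upper_rounded b s).1 hb.
have upper_mono c (t t' : rat) : t <= t' -> m (t *: u - c) -> m (t' *: u - c).
  by move=> htt'; apply: point_mono; apply: (riesz_add HR); apply: (le_scalel HR Hu.1).
set s' := Num.max s1 s2.
have hs' : s' < s by rewrite gt_max hs1 hs2.
have ha' : m (s' *: u - a) by apply: (upper_mono _ s1) => //; rewrite le_max lexx.
have hb' : m (s' *: u - b) by apply: (upper_mono _ s2) => //; rewrite le_max lexx orbT.
case: (cut_located (join a b) hs') => // /lower_join [] h.
  by have := cut_disjoint h ha'; rewrite ltxx.
by have := cut_disjoint h hb'; rewrite ltxx.
Qed.

Lemma sigma_join a b :
  cut_eq (sigma u m (join a b)) (cut_max (sigma u m a) (sigma u m b)).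
Proof. by move=> r; split; [exact: lower_join | exact: upper_join]. Qed.

Lemma sigma_meet a b :
  cut_eq (sigma u m (rmeet join a b)) (cut_min (sigma u m a) (sigma u m b)).
Proof.
move=> r; rewrite /rmeet /sigma /cut_min /=; set J := join (- a) (- b).
have lower_meet : m (- J - r *: u) <-> m (- r *: u - J).
  by rewrite upper_as_lower opprK.
have upper_meet : m (r *: u - - J) <-> m (J - - r *: u).
  by rewrite upper_as_lower opprK.
rewrite lower_meet upper_meet upper_join lower_join.
by rewrite !upper_as_lower !opprK -!(upper_as_lower _ r).
Qed.

Lemma sigma_unit : cut_eq (sigma u m u) (cut_of_rat 1).
Proof.
move=> r; rewrite /sigma /cut_of_rat /=.
split.
  by rewrite -{1}(scale1r u) -scalerBl point_rat subr_gt0.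
by rewrite -{2}(scale1r u) -scalerBl point_rat subr_gt0.
Qed.

End Point.

Theorem proposition2p6 (V : lmodType rat) (le : rel V) (join : V -> V -> V)
    (u : V) (HR : is_riesz le join) (Hu : strong_unit le u)
    (m : V -> Prop) (Hm : is_point le join u m) :
  (forall a : V, is_dedekind (sigma u m a)) /\
  (forall a b : V,
      cut_eq (sigma u m (a + b)) (cut_add (sigma u m a) (sigma u m b))) /\
  (forall (l : rat) (a : V),
      cut_eq (sigma u m (l *: a)) (cut_scale l (sigma u m a))) /\
  (forall a b : V,
      cut_eq (sigma u m (join a b)) (cut_max (sigma u m a) (sigma u m b))) /\
  (forall a b : V,
      cut_eq (sigma u m (rmeet join a b)) (cut_min (sigma u m a) (sigma u m b))) /\
  cut_eq (sigma u m u) (cut_of_rat 1).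
Proof.
split; first exact: sigma_dedekind HR Hu Hm.
split; first exact: sigma_add HR Hu Hm.
split; first exact: sigma_scale HR Hu Hm.
split; first exact: sigma_join HR Hu Hm.
split; first exact: sigma_meet HR Hu Hm.
exact: sigma_unit HR Hu Hm.
Qed.
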